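(* Let $c>0$, $\alpha>0$ and $g\in C^2(\mathbb{R})$. Let $w(x,t)=\frac{1}{2c}\int_{x-ct}^{x+ct}g(y)\,dy$ be the solution of the wave equation $\frac{\partial^2 w}{\partial t^2}= c^2 \frac{\partial^2 w}{\partial x^2}$ with $w(x,0)=0$, $\frac{\partial w}{\partial t}(x,0)=g(x)$. Define $$v(x,t)=\frac{2}{B(\alpha,\frac12)}\int_0^1(1-u^2)^{\alpha-1}\,w(x,ut)\,du .$$ Then $v$ solves $$\frac{\partial^2 v}{\partial t^2}+\frac{2\alpha}{t}\frac{\partial v}{\partial t}= c^2 \frac{\partial^2 v}{\partial x^2}+\frac{2g(x)}{t\,B(\alpha,\frac12)},\quad t>0,$$ with $v(x,0)=0$ and $\frac{\partial v}{\partial t}(x,0)=\frac{\Gamma(\alpha+\frac12)}{\sqrt{\pi}\,\Gamma(\alpha+1)}\,g(x)$.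
   Context: $B(a,b)=\Gamma(a)\Gamma(b)/\Gamma(a+b)$ denotes the Beta function. *)

From Stdlib Require Import Reals Lra ClassicalEpsilon.
Open Scope R_scope.

Definition is_RInt (f : R -> R) (a b l : R) : Prop :=
  exists pr : Riemann_integrable f a b, RiemannInt pr = l.
Definition RInt (f : R -> R) (a b : R) : R :=
  epsilon (inhabits 0) (fun l => is_RInt f a b l).

Definition is_int_0_1 (f : R -> R) (l : R) : Prop :=
  forall eps, 0 < eps -> exists d, 0 < d /\
    forall b, 1 - d < b < 1 ->
      exists pr : Riemann_integrable f 0 b, Rabs (RiemannInt pr - l) < eps.
Definition int_0_1 (f : R -> R) : R :=
  epsilon (inhabits 0) (fun l => is_int_0_1 f l).

Definition is_int_0_inf (f : R -> R) (l : R) : Prop :=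
  forall eps, 0 < eps -> exists d N, 0 < d /\
    forall e M, 0 < e < d -> N < M ->
      exists pr : Riemann_integrable f e M, Rabs (RiemannInt pr - l) < eps.

Definition Gamma (a : R) : R :=
  epsilon (inhabits 0)
    (fun l => is_int_0_inf (fun t => Rpower t (a - 1) * exp (- t)) l).

Definition Beta (a b : R) : R := Gamma a * Gamma b / Gamma (a + b).

Definition wave_sol (c : R) (g : R -> R) (x t : R) : R :=
  / (2 * c) * RInt g (x - c * t) (x + c * t).

Definition v_sol (alpha c : R) (g : R -> R) (x t : R) : R :=
  2 / Beta alpha (1 / 2) *
  int_0_1 (fun u => Rpower (1 - u ^ 2) (alpha - 1) * wave_sol c g x (u * t)).

Definition right_deriv (f : R -> R) (x l : R) : Prop :=
  forall eps, 0 < eps -> exists d, 0 < d /\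
    forall h, 0 < h < d -> Rabs ((f (x + h) - f x) / h - l) < eps.

(* The averaging operator [J a f = int_0^1 (1 - u^2)^(a-1) f(u) du] may be differentiated under
   the integral sign with respect to a parameter, because the parameter derivatives of the integrands
   occurring here are uniformly continuous for [u] in [0,1].  Hence [v = 2/B(alpha,1/2) J_alpha
   (u |-> w(x,ut))] inherits its derivatives from d'Alembert's formula.  The equation then reduces to an
   integration by parts against [(1 - u^2)^alpha], whose derivative is [-2 alpha u (1 - u^2)^(alpha-1)]:
   the wave equation [w_tt = c^2 w_xx] absorbs all terms but the boundary term at [u = 0], which is
   [2 g(x) / (t B(alpha,1/2))].  At [t = 0], [v_t = 2 g(x) J_alpha(u |-> u) / B(alpha,1/2)
   = g(x) / (alpha B(alpha,1/2))], and [Gamma(alpha+1) = alpha Gamma(alpha)] together with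
   [Gamma(1/2) = sqrt pi] (the Gaussian integral) turn this into the stated constant. *)

From Pilot Require Import Defs.
From Coquelicot Require Import Coquelicot.
From Stdlib Require Import Reals Lra ClassicalEpsilon FunctionalExtensionality.
Open Scope R_scope.

Lemma exp_le_mono x y : x <= y -> exp x <= exp y.
Proof.
  intros h; destruct (Rle_lt_or_eq_dec _ _ h) as [h'| ->]; [left; apply exp_increasing; auto| lra].
Qed.

Lemma Rpower_pos x y : 0 < Rpower x y.
Proof. apply exp_pos. Qed.

Lemma filterlim_Rabs {T} (F : (T -> Prop) -> Prop) {FF : Filter F} (f : T -> R) l :
  filterlim f F (locally l) <-> forall eps, 0 < eps -> F (fun x => Rabs (f x - l) < eps).
Proof.
  rewrite filterlim_locally. split.
  - intros h eps he. exact (h (mkposreal eps he)).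
  - intros h eps. exact (h eps (cond_pos eps)).
Qed.

Lemma filterlim_lin {T} {F : (T -> Prop) -> Prop} {FF : Filter F} (f g : T -> R) (lf lg p q : R) :
  filterlim f F (locally lf) -> filterlim g F (locally lg) ->
  filterlim (fun x => p * f x + q * g x) F (locally (p * lf + q * lg)).
Proof.
  intros hf hg. eapply filterlim_comp_2;
    [apply filterlim_comp with (2 := filterlim_scal_r p lf); exact hf
    |apply filterlim_comp with (2 := filterlim_scal_r q lg); exact hg
    |apply (filterlim_plus (V := R_NormedModule))].
Qed.

Lemma at_left_intro x (P : R -> Prop) :
  (exists d, 0 < d /\ forall b, x - d < b < x -> P b) -> at_left x P.
Proof.
  intros [d [dp h]]. exists (mkposreal d dp). intros b hb hbx.
  change (Rabs (b - x) < d) in hb. apply Rabs_def2 in hb. apply h. lra.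
Qed.

Lemma at_left_elim x (P : R -> Prop) :
  at_left x P -> exists d, 0 < d /\ forall b, x - d < b < x -> P b.
Proof.
  intros [d hd]. exists d. split; [apply cond_pos|]. intros b hb.
  apply hd; [change (Rabs (b - x) < d); apply Rabs_def1|]; lra.
Qed.

Notation at_0_pinfty := (filter_prod (at_right 0) (Rbar_locally p_infty)).

Lemma at_0_pinfty_intro (P : R * R -> Prop) :
  (exists d N, 0 < d /\ forall e M, 0 < e < d -> N < M -> P (e, M)) -> at_0_pinfty P.
Proof.
  intros [d [N [dp h]]].
  apply (Filter_prod _ _ _ (fun e => 0 < e < d) (fun M => N < M)); auto.
  - exists (mkposreal d dp). intros e he e0.
    change (Rabs (e - 0) < d) in he. apply Rabs_def2 in he. lra.
  - exists N. auto.
Qed.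

Lemma at_0_pinfty_elim (P : R * R -> Prop) :
  at_0_pinfty P -> exists d N, 0 < d /\ forall e M, 0 < e < d -> N < M -> P (e, M).
Proof.
  intros [Q S [d hQ] [N hS] h]. exists d, N. split; [apply cond_pos|].
  intros e M he hM. apply h; [apply hQ; [change (Rabs (e - 0) < d); apply Rabs_def1|]| apply hS]; lra.
Qed.

Lemma filterlim_of_is_int_0_1 f l :
  is_int_0_1 f l -> filterlim (fun b => RInt f 0 b) (at_left 1) (locally l).
Proof.
  intros h. apply (proj2 (filterlim_Rabs _ _ _)). intros eps he. apply at_left_intro.
  destruct (h eps he) as [d [dp A]]. exists d; split; auto.
  intros b hb. destruct (A b hb) as [pr B]. rewrite (RInt_Reals _ _ _ pr). exact B.
Qed.

Lemma is_int_0_1_of_filterlim f l :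
  at_left 1 (fun b => ex_RInt f 0 b) ->
  filterlim (fun b => RInt f 0 b) (at_left 1) (locally l) -> is_int_0_1 f l.
Proof.
  intros hex hl eps he.
  destruct (at_left_elim _ _ (filter_and _ _ hex (proj1 (filterlim_Rabs _ _ _) hl eps he)))
    as [d [dp A]].
  exists d; split; auto. intros b hb. destruct (A b hb) as [ex B].
  exists (ex_RInt_Reals_0 _ _ _ ex). rewrite <- RInt_Reals. exact B.
Qed.

Lemma int_0_1_unique f l : is_int_0_1 f l -> int_0_1 f = l.
Proof.
  intros h. unfold int_0_1.
  pose proof (epsilon_spec (inhabits 0) (is_int_0_1 f) (ex_intro _ l h)) as H.
  apply (filterlim_locally_unique (F := at_left 1) (V := R_NormedModule) (fun b => RInt f 0 b));
    apply filterlim_of_is_int_0_1; assumption.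
Qed.

Lemma filterlim_of_is_int_0_inf f l :
  is_int_0_inf f l -> filterlim (fun p => RInt f (fst p) (snd p)) at_0_pinfty (locally l).
Proof.
  intros h. apply (proj2 (filterlim_Rabs _ _ _)). intros eps he. apply at_0_pinfty_intro.
  destruct (h eps he) as [d [N [dp A]]]. exists d, N; split; auto.
  intros e M he' hM. destruct (A e M he' hM) as [pr B]. simpl. rewrite (RInt_Reals _ _ _ pr). exact B.
Qed.

Lemma is_int_0_inf_of_filterlim f l :
  (forall e M, 0 < e -> 0 < M -> ex_RInt f e M) ->
  filterlim (fun p => RInt f (fst p) (snd p)) at_0_pinfty (locally l) -> is_int_0_inf f l.
Proof.
  intros hex hl eps he.
  destruct (at_0_pinfty_elim _ (proj1 (filterlim_Rabs _ _ _) hl eps he)) as [d [N [dp A]]].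
  exists (Rmin d 1), (Rmax N 1). split; [apply Rmin_pos; lra|].
  intros e M he' hM. assert (H1 := Rmin_l d 1). assert (H2 := Rmax_r N 1). assert (H3 := Rmax_l N 1).
  assert (ex : ex_RInt f e M) by (apply hex; lra).
  exists (ex_RInt_Reals_0 _ _ _ ex). rewrite <- RInt_Reals. apply (A e M); lra.
Qed.

Lemma Defs_RInt_continuous g a b : continuity g -> Defs.RInt g a b = RInt g a b.
Proof.
  intros hg.
  assert (ex : ex_RInt g a b).
  { apply (ex_RInt_continuous (V := R_CompleteNormedModule)). intros; apply continuity_pt_filterlim, hg. }
  unfold Defs.RInt.
  assert (E : exists l, Defs.is_RInt g a b l).
  { exists (RInt g a b), (ex_RInt_Reals_0 _ _ _ ex). rewrite <- RInt_Reals. reflexivity. }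
  destruct (epsilon_spec (inhabits 0) (fun l => Defs.is_RInt g a b l) E) as [pr <-].
  rewrite <- RInt_Reals. reflexivity.
Qed.

Lemma ex_RInt_continuity_pt (f : R -> R) p q :
  (forall u, Rmin p q <= u <= Rmax p q -> continuity_pt f u) -> ex_RInt f p q.
Proof.
  intros hc. apply (ex_RInt_continuous (V := R_CompleteNormedModule)).
  intros u hu. apply continuity_pt_filterlim, hc, hu.
Qed.

Lemma RInt_derivable_pt_lim (F f : R -> R) p q :
  (forall u, Rmin p q <= u <= Rmax p q -> derivable_pt_lim F u (f u)) ->
  (forall u, Rmin p q <= u <= Rmax p q -> continuity_pt f u) ->
  RInt f p q = F q - F p.
Proof.
  intros hd hc. apply is_RInt_unique.
  apply (is_RInt_derive (V := R_CompleteNormedModule) F f).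
  - intros u hu. apply is_derive_Reals, hd, hu.
  - intros u hu. apply continuity_pt_filterlim, hc, hu.
Qed.

Lemma RInt_Chasles_0 (f : R -> R) p q : ex_RInt f 0 p -> ex_RInt f p q ->
  RInt f 0 q - RInt f 0 p = RInt f p q.
Proof.
  intros h1 h2. rewrite <- (RInt_Chasles f 0 p q h1 h2). simpl. unfold plus; simpl. ring.
Qed.

Lemma RInt_lin (f g : R -> R) p q a b : ex_RInt f a b -> ex_RInt g a b ->
  RInt (fun u => p * f u + q * g u) a b = p * RInt f a b + q * RInt g a b.
Proof.
  intros h1 h2. apply is_RInt_unique.
  apply (is_RInt_plus (V := R_NormedModule) (fun u => p * f u) (fun u => q * g u));
    apply (is_RInt_scal (V := R_NormedModule)), (RInt_correct (V := R_CompleteNormedModule)); auto.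
Qed.

Lemma continuity_lin f g p q :
  continuity f -> continuity g -> continuity (fun u => p * f u + q * g u).
Proof. intros hf hg. apply continuity_plus; apply continuity_scal; auto. Qed.

Lemma continuity_bounded_01 f :
  continuity f -> exists M, 0 <= M /\ forall u, 0 <= u <= 1 -> Rabs (f u) <= M.
Proof.
  intros hf. destruct (continuity_ab_maj (fun u => Rabs (f u)) 0 1) as [m [hm _]]; [lra| |].
  - intros u _. apply (continuity_pt_comp f Rabs); [apply hf| apply Rcontinuity_abs].
  - exists (Rabs (f m)); split; [apply Rabs_pos| auto].
Qed.

Lemma continuity_of_derivable_pt_lim (F F' : R -> R) :
  (forall z, derivable_pt_lim F z (F' z)) -> continuity F.
Proof. intros h u. apply derivable_continuous_pt. exists (F' u). apply h. Qed.

Lemma continuity_of_ex_derive (f : R -> R) : (forall x, ex_derive f x) -> continuity f.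
Proof. intros h x. apply continuity_pt_filterlim, (ex_derive_continuous (V := R_NormedModule)), h. Qed.

Lemma continuity_scale (F : R -> R) t : continuity F -> continuity (fun u => F (u * t)).
Proof.
  intros hF u. apply (continuity_pt_comp (fun u => u * t) F); [|apply hF].
  apply derivable_continuous_pt. exists t. apply is_derive_Reals. auto_derive; auto; ring.
Qed.

Lemma continuity_id_mult F : continuity F -> continuity (fun u => u * F u).
Proof. intros hF. apply continuity_mult; [exact (derivable_continuous _ derivable_id)| exact hF]. Qed.

Lemma derivable_pt_lim_dilate (F F' : R -> R) u s : (forall z, derivable_pt_lim F z (F' z)) ->
  derivable_pt_lim (fun s => F (u * s)) s (u * F' (u * s)).
Proof.
  intros hF. apply is_derive_Reals, (is_derive_comp F); [apply is_derive_Reals, hF|].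
  auto_derive; auto; ring.
Qed.

Lemma derivable_pt_lim_dilate_l (F F' : R -> R) u t : (forall z, derivable_pt_lim F z (F' z)) ->
  derivable_pt_lim (fun u => F (u * t)) u (t * F' (u * t)).
Proof.
  intros hF. apply is_derive_Reals, (is_derive_comp F); [apply is_derive_Reals, hF|].
  auto_derive; auto; ring.
Qed.

Definition rho (a u : R) : R := Rpower (1 - u ^ 2) (a - 1).
Definition sigma (a u : R) : R := Rpower (1 - u ^ 2) a.

Lemma rho_pos a u : 0 < rho a u.
Proof. apply Rpower_pos. Qed.

Lemma sigma_pos a u : 0 < sigma a u.
Proof. apply Rpower_pos. Qed.

Lemma sigma_rho a u : -1 < u < 1 -> sigma a u = rho a u * (1 - u ^ 2).
Proof.
  intros hu. unfold sigma, rho.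
  replace a with ((a - 1) + 1) at 1 by ring.
  rewrite Rpower_plus, Rpower_1 by nra. ring.
Qed.

Lemma sigma_0 a : sigma a 0 = 1.
Proof. unfold sigma, Rpower. replace (1 - 0 ^ 2) with 1 by ring. rewrite ln_1, Rmult_0_r. apply exp_0. Qed.

Lemma derivable_pt_lim_sigma a u :
  -1 < u < 1 -> derivable_pt_lim (sigma a) u (- 2 * a * u * rho a u).
Proof.
  intros hu.
  replace (- 2 * a * u * rho a u) with ((a * Rpower (1 - u ^ 2) (a - 1)) * (0 - INR 2 * u ^ (2 - 1)))
    by (unfold rho; simpl; ring).
  apply (derivable_pt_lim_comp (fun u => 1 - u ^ 2) (fun x => Rpower x a)).
  - apply derivable_pt_lim_minus; [apply derivable_pt_lim_const| apply derivable_pt_lim_pow].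
  - apply derivable_pt_lim_power. nra.
Qed.

Lemma continuity_pt_rho a u : -1 < u < 1 -> continuity_pt (rho a) u.
Proof.
  intros hu. apply (continuity_pt_comp (fun u => 1 - u ^ 2) (fun x => Rpower x (a - 1))).
  - apply continuity_pt_minus; [apply continuity_pt_const; intros ? ?; auto|].
    apply derivable_continuous_pt, derivable_pt_pow.
  - apply derivable_continuous_pt. exists ((a - 1) * Rpower (1 - u ^ 2) (a - 1 - 1)).
    apply derivable_pt_lim_power. nra.
Qed.

(* The majorant [2 + 2 u rho] of [rho] has the explicit primitive [2 u - sigma / a]. *)
Lemma rho_le a u : 0 < a -> 0 <= u < 1 -> rho a u <= 2 + 2 * u * rho a u.
Proof.
  intros ha hu. assert (hr := rho_pos a u).
  destruct (Rle_lt_dec (1 / 2) u) as [h|h]; [nra|].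
  assert (rho a u <= 2); [|nra].
  assert (hln2 : 0 < ln 2) by (rewrite <- ln_1; apply ln_increasing; lra).
  assert (hl : ln (1 - u ^ 2) <= 0) by (rewrite <- ln_1; apply ln_le; nra).
  assert (hl2 : - ln 2 <= ln (1 - u ^ 2)) by (rewrite <- ln_Rinv by lra; apply ln_le; nra).
  unfold rho, Rpower. rewrite <- (exp_ln 2) by lra. apply exp_le_mono.
  destruct (Rle_lt_dec 1 a); nra.
Qed.

Lemma filterlim_sigma_left1 a : 0 < a -> filterlim (sigma a) (at_left 1) (locally 0).
Proof.
  intros ha. apply (proj2 (filterlim_Rabs _ _ _)). intros eps he. apply at_left_intro.
  assert (hr := Rpower_pos eps (/ a)). set (r := Rpower eps (/ a)) in *.
  exists (Rmin 1 (r / 2)). split; [apply Rmin_pos; lra|].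
  intros b hb. assert (Hm1 := Rmin_l 1 (r / 2)). assert (Hm2 := Rmin_r 1 (r / 2)).
  rewrite Rminus_0_r, Rabs_right by (left; apply sigma_pos).
  replace eps with (Rpower r a)
    by (unfold r; rewrite Rpower_mult, Rinv_l, Rpower_1 by lra; reflexivity).
  apply Rlt_Rpower_l; [lra| nra].
Qed.

(** * The averaging operator [J a f = int_0^1 (1 - u^2)^(a-1) f(u) du] *)

Definition Jint (a : R) (f : R -> R) : R := int_0_1 (fun u => rho a u * f u).

Lemma Jint_ext a f g : (forall u, f u = g u) -> Jint a f = Jint a g.
Proof.
  intros h. unfold Jint. f_equal. apply functional_extensionality. intros u. rewrite h. reflexivity.
Qed.

Section Averaging.

Variable a : R.
Hypothesis ha : 0 < a.

Lemma continuity_pt_rho_mult f u :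
  continuity f -> -1 < u < 1 -> continuity_pt (fun u => rho a u * f u) u.
Proof. intros hf hu. apply continuity_pt_mult; [apply continuity_pt_rho; auto| apply hf]. Qed.

Lemma ex_RInt_rho_mult f p q :
  continuity f -> 0 <= p < 1 -> 0 <= q < 1 -> ex_RInt (fun u => rho a u * f u) p q.
Proof.
  intros hf hp hq. apply ex_RInt_continuity_pt. intros u hu. apply continuity_pt_rho_mult; auto.
  destruct (Rle_dec p q);
    [rewrite Rmin_left, Rmax_right in hu| rewrite Rmin_right, Rmax_left in hu]; lra.
Qed.

Lemma RInt_rho_majorant M p q : 0 <= p <= q -> q < 1 ->
  RInt (fun u => M * (2 + 2 * u * rho a u)) p q
  = M * (2 * q - sigma a q / a) - M * (2 * p - sigma a p / a).
Proof.
  intros hp hq. apply (RInt_derivable_pt_lim (fun u => M * (2 * u - sigma a u / a))).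
  - intros u hu. rewrite Rmin_left, Rmax_right in hu by lra.
    replace (M * (2 + 2 * u * rho a u)) with (M * (2 * 1 - (- 2 * a * u * rho a u) / a))
      by (field; lra).
    apply derivable_pt_lim_scal, derivable_pt_lim_minus.
    + exact (derivable_pt_lim_scal id 2 u 1 (derivable_pt_lim_id u)).
    + apply (derivable_pt_lim_div_scal (sigma a)), derivable_pt_lim_sigma. lra.
  - intros u hu. rewrite Rmin_left, Rmax_right in hu by lra.
    apply continuity_pt_scal, continuity_pt_plus; [apply continuity_pt_const; intros ? ?; auto|].
    apply continuity_pt_mult; [apply continuity_pt_scal, derivable_continuous_pt, derivable_pt_id|].
    apply continuity_pt_rho. lra.
Qed.

Lemma RInt_rho_mult_increment_le f M p q :
  continuity f -> (forall u, 0 <= u <= 1 -> Rabs (f u) <= M) -> 0 <= p <= q -> q < 1 ->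
  Rabs (RInt (fun u => rho a u * f u) 0 q - RInt (fun u => rho a u * f u) 0 p)
  <= M * (2 * (q - p) + (sigma a p - sigma a q) / a).
Proof.
  intros hf hM hp hq.
  rewrite RInt_Chasles_0 by (apply ex_RInt_rho_mult; auto; lra).
  eapply Rle_trans; [apply abs_RInt_le; [lra| apply ex_RInt_rho_mult; auto; lra]|].
  replace (M * (2 * (q - p) + (sigma a p - sigma a q) / a))
    with (M * (2 * q - sigma a q / a) - M * (2 * p - sigma a p / a)) by (field; lra).
  rewrite <- RInt_rho_majorant by lra.
  apply RInt_le; [lra| | |].
  - apply ex_RInt_continuity_pt. intros u hu. rewrite Rmin_left, Rmax_right in hu by lra.
    apply (continuity_pt_comp (fun u => rho a u * f u) Rabs);
      [apply continuity_pt_rho_mult; auto; lra| apply Rcontinuity_abs].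
  - apply ex_RInt_continuity_pt. intros u hu. rewrite Rmin_left, Rmax_right in hu by lra.
    apply continuity_pt_scal, continuity_pt_plus; [apply continuity_pt_const; intros ? ?; auto|].
    apply continuity_pt_mult; [apply continuity_pt_scal, derivable_continuous_pt, derivable_pt_id|].
    apply continuity_pt_rho. lra.
  - intros u hu. rewrite Rabs_mult, (Rabs_right (rho a u)) by (left; apply rho_pos).
    assert (H1 := hM u ltac:(lra)). assert (H2 := rho_le a u ha ltac:(lra)).
    assert (H3 := rho_pos a u). assert (H4 := Rabs_pos (f u)). nra.
Qed.

Lemma RInt_rho_mult_cauchy f : continuity f ->
  forall eps, 0 < eps -> exists d, 0 < d /\ forall p q, 1 - d < p < 1 -> 1 - d < q < 1 ->
    Rabs (RInt (fun u => rho a u * f u) 0 q - RInt (fun u => rho a u * f u) 0 p) < eps.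
Proof.
  intros hf eps he. destruct (continuity_bounded_01 f hf) as [M [M0 hM]].
  set (e := eps / (2 * (M + 1))). assert (he' : 0 < e) by (unfold e; apply Rdiv_lt_0_compat; lra).
  destruct (at_left_elim _ _ (proj1 (filterlim_Rabs _ _ _) (filterlim_sigma_left1 a ha) (a * e)
    ltac:(nra))) as [d1 [d1p H1]].
  set (d := Rmin (Rmin d1 1) (e / 2)).
  assert (Hd1 : d <= Rmin d1 1) by apply Rmin_l. assert (Hd2 : d <= e / 2) by apply Rmin_r.
  assert (Hd3 := Rmin_l d1 1). assert (Hd4 := Rmin_r d1 1).
  assert (key : forall p q, 1 - d < p <= q -> q < 1 ->
            Rabs (RInt (fun u => rho a u * f u) 0 q - RInt (fun u => rho a u * f u) 0 p) < eps).
  { intros p q hpq hq. eapply Rle_lt_trans; [apply RInt_rho_mult_increment_le; eauto; lra|].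
    assert (hp := H1 p ltac:(lra)). rewrite Rminus_0_r, Rabs_right in hp by (left; apply sigma_pos).
    assert (hsq := sigma_pos a q).
    assert ((sigma a p - sigma a q) / a < e)
      by (apply (Rmult_lt_reg_r a); [lra|]; unfold Rdiv; rewrite Rmult_assoc, Rinv_l; lra).
    assert (M * (2 * (q - p) + (sigma a p - sigma a q) / a) <= M * (2 * e)) by (apply Rmult_le_compat_l; lra).
    assert (M * (2 * e) < eps) by (unfold e; apply (Rmult_lt_reg_r (M + 1)); [lra|]; field_simplify; lra).
    lra. }
  exists d. split; [apply Rmin_pos; [apply Rmin_pos|]; lra|].
  intros p q hp hq. destruct (Rle_dec p q).
  - apply key; lra.
  - rewrite Rabs_minus_sym. apply key; lra.
Qed.

Lemma filterlim_Jint f : continuity f ->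
  filterlim (fun b => RInt (fun u => rho a u * f u) 0 b) (at_left 1) (locally (Jint a f)).
Proof.
  intros hf.
  destruct (proj1 (filterlim_locally_cauchy (F := at_left 1) (fun b => RInt (fun u => rho a u * f u) 0 b)))
    as [y hy].
  { intros eps. destruct (RInt_rho_mult_cauchy f hf eps (cond_pos eps)) as [d [dp hd]].
    exists (fun b => 1 - d < b < 1). split; [apply at_left_intro; exists d; auto|].
    intros p q hp hq. apply hd; auto. }
  replace (Jint a f) with y; [exact hy|]. symmetry. apply int_0_1_unique, is_int_0_1_of_filterlim; auto.
  apply at_left_intro. exists 1. split; [lra|]. intros b hb. apply ex_RInt_rho_mult; auto; lra.
Qed.

Lemma Jint_unique f L : continuity f ->
  filterlim (fun b => RInt (fun u => rho a u * f u) 0 b) (at_left 1) (locally L) -> Jint a f = L.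
Proof.
  intros hf h.
  exact (filterlim_locally_unique (F := at_left 1) (V := R_NormedModule) _ _ _ (filterlim_Jint f hf) h).
Qed.

Lemma Jint_bound f M : continuity f -> (forall u, 0 <= u <= 1 -> Rabs (f u) <= M) ->
  Rabs (Jint a f) <= M * (2 + 1 / a).
Proof.
  intros hf hM.
  assert (hb : at_left 1 (fun b => Rabs (RInt (fun u => rho a u * f u) 0 b) <= M * (2 + 1 / a))).
  { apply at_left_intro. exists 1. split; [lra|]. intros b hb.
    assert (T := RInt_rho_mult_increment_le f M 0 b hf hM ltac:(lra) ltac:(lra)).
    rewrite RInt_point, sigma_0 in T. simpl in T. unfold zero in T; simpl in T.
    rewrite Rminus_0_r in T. assert (hs := sigma_pos a b).
    assert (M0 : 0 <= M) by (specialize (hM 0 ltac:(lra)); assert (H := Rabs_pos (f 0)); lra).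
    eapply Rle_trans; [exact T|]. apply Rmult_le_compat_l; [lra|].
    assert ((1 - sigma a b) / a <= 1 / a)
      by (unfold Rdiv; apply Rmult_le_compat_r; [left; apply Rinv_0_lt_compat|]; lra).
    lra. }
  apply (filterlim_le (F := at_left 1) _ (fun _ => M * (2 + 1 / a)) (Rabs (Jint a f)) (M * (2 + 1 / a)) hb).
  - apply filterlim_comp with (1 := filterlim_Jint f hf). apply continuous_Rabs.
  - apply filterlim_const.
Qed.

Lemma Jint_lin f g p q : continuity f -> continuity g ->
  Jint a (fun u => p * f u + q * g u) = p * Jint a f + q * Jint a g.
Proof.
  intros hf hg. apply Jint_unique; [apply continuity_lin; auto|].
  apply (filterlim_ext_loc (fun b => p * RInt (fun u => rho a u * f u) 0 b
                                   + q * RInt (fun u => rho a u * g u) 0 b)).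
  - apply at_left_intro. exists 1. split; [lra|]. intros b hb.
    rewrite <- RInt_lin by (apply ex_RInt_rho_mult; auto; lra).
    apply RInt_ext. intros x _. simpl. ring.
  - apply filterlim_lin; apply filterlim_Jint; auto.
Qed.

Lemma Jint_id : Jint a (fun u => u) = 1 / (2 * a).
Proof.
  assert (hid : continuity (fun u => u)) by exact (derivable_continuous _ derivable_id).
  apply Jint_unique; auto.
  apply (filterlim_ext_loc (fun b => / (2 * a) * 1 + (- / (2 * a)) * sigma a b)).
  - apply at_left_intro. exists 1. split; [lra|]. intros b hb. symmetry.
    replace (/ (2 * a) * 1 + - / (2 * a) * sigma a b)
      with (- sigma a b / (2 * a) - - sigma a 0 / (2 * a)) by (rewrite sigma_0; field; lra).
    apply (RInt_derivable_pt_lim (fun u => - sigma a u / (2 * a))).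
    + intros u hu. rewrite Rmin_left, Rmax_right in hu by lra.
      replace (rho a u * u) with (- (- 2 * a * u * rho a u) / (2 * a)) by (field; lra).
      apply (derivable_pt_lim_div_scal (fun u => - sigma a u)), derivable_pt_lim_opp.
      apply derivable_pt_lim_sigma. lra.
    + intros u hu. rewrite Rmin_left, Rmax_right in hu by lra.
      apply continuity_pt_rho_mult; auto. lra.
  - replace (1 / (2 * a)) with (/ (2 * a) * 1 + (- / (2 * a)) * 0) by (field; lra).
    apply filterlim_lin; [apply filterlim_const| apply filterlim_sigma_left1; auto].
Qed.

Lemma Jint_zero : Jint a (fun _ => 0) = 0.
Proof.
  assert (H := Jint_bound (fun _ => 0) 0 (continuity_const (fun _ => 0) (fun _ _ => eq_refl))).
  rewrite Rmult_0_l in H. apply Rabs_eq_0, Rle_antisym; [apply H|apply Rabs_pos].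
  intros; rewrite Rabs_R0; lra.
Qed.

Lemma filterlim_sigma_mult f : continuity_pt f 1 ->
  filterlim (fun b => sigma a b * f b) (at_left 1) (locally 0).
Proof.
  intros hf. rewrite <- (Rmult_0_l (f 1)).
  eapply filterlim_comp_2; [apply filterlim_sigma_left1; auto| | apply (filterlim_mult (K := R_AbsRing))].
  apply (filterlim_filter_le_1 (F := locally 1)); [apply filter_le_within|].
  apply continuity_pt_filterlim, hf.
Qed.

End Averaging.

(** * Differentiation under the averaging operator *)

Definition unif_continuity_pt (phi : R -> R -> R) (y0 : R) : Prop :=
  forall eps, 0 < eps -> exists d, 0 < d /\
    forall y u, Rabs (y - y0) < d -> 0 <= u <= 1 -> Rabs (phi y u - phi y0 u) <= eps.

Lemma unif_continuity_pt_comp (F p q : R -> R) Bp Bq y0 : continuity F ->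
  (forall u, 0 <= u <= 1 -> Rabs (p u) <= Bp /\ Rabs (q u) <= Bq) ->
  unif_continuity_pt (fun y u => F (p u + q u * y)) y0.
Proof.
  intros hF hb eps he.
  set (Rb := Bp + Bq * (Rabs y0 + 1)).
  assert (hBq : 0 <= Bq) by (destruct (hb 0 ltac:(lra)) as [_ h]; assert (H := Rabs_pos (q 0)); lra).
  assert (hin : forall y u, Rabs (y - y0) <= 1 -> 0 <= u <= 1 -> - Rb <= p u + q u * y <= Rb).
  { intros y u hy hu. destruct (hb u hu) as [hp hq].
    assert (Rabs y <= Rabs y0 + 1)
      by (replace y with (y0 + (y - y0)) by ring; eapply Rle_trans; [apply Rabs_triang| lra]).
    assert (Rabs (p u + q u * y) <= Rb).
    { eapply Rle_trans; [apply Rabs_triang|]. rewrite Rabs_mult.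
      assert (Rabs (q u) * Rabs y <= Bq * (Rabs y0 + 1))
        by (apply Rmult_le_compat; auto; apply Rabs_pos).
      unfold Rb. lra. }
    apply Rabs_le_between. auto. }
  destruct (Heine F (fun x => - Rb <= x <= Rb) (compact_P3 _ _) (fun x _ => hF x) (mkposreal eps he))
    as [dl hdl].
  assert (hdl0 := cond_pos dl).
  exists (Rmin 1 (dl / (Bq + 1))). split; [apply Rmin_pos; [lra| apply Rdiv_lt_0_compat; lra]|].
  intros y u hy hu. assert (Hm1 := Rmin_l 1 (dl / (Bq + 1))). assert (Hm2 := Rmin_r 1 (dl / (Bq + 1))).
  left. apply hdl; [apply hin; lra| apply hin; [rewrite Rminus_diag, Rabs_R0|]; lra|].
  replace (p u + q u * y - (p u + q u * y0)) with (q u * (y - y0)) by ring.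
  rewrite Rabs_mult. destruct (hb u hu) as [_ hq].
  assert (Rabs (q u) * Rabs (y - y0) <= Bq * (dl / (Bq + 1)))
    by (apply Rmult_le_compat; try apply Rabs_pos; lra).
  assert (Bq * (dl / (Bq + 1)) < dl) by (apply (Rmult_lt_reg_r (Bq + 1)); [lra|]; field_simplify; lra).
  lra.
Qed.

Lemma unif_continuity_pt_lin (phi phi1 phi2 : R -> R -> R) (k1 k2 : R -> R) K y0 :
  (forall u, 0 <= u <= 1 -> Rabs (k1 u) <= K /\ Rabs (k2 u) <= K) ->
  (forall y u, phi y u = k1 u * phi1 y u + k2 u * phi2 y u) ->
  unif_continuity_pt phi1 y0 -> unif_continuity_pt phi2 y0 -> unif_continuity_pt phi y0.
Proof.
  intros hk hphi h1 h2 eps he.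
  assert (hK : 0 <= K) by (destruct (hk 0 ltac:(lra)) as [h _]; assert (H := Rabs_pos (k1 0)); lra).
  set (e := eps / (2 * (K + 1))). assert (he' : 0 < e) by (unfold e; apply Rdiv_lt_0_compat; lra).
  destruct (h1 e he') as [d1 [d1p H1]]. destruct (h2 e he') as [d2 [d2p H2]].
  exists (Rmin d1 d2). split; [apply Rmin_pos; auto|].
  intros y u hy hu. assert (Hm1 := Rmin_l d1 d2). assert (Hm2 := Rmin_r d1 d2).
  specialize (H1 y u ltac:(lra) hu). specialize (H2 y u ltac:(lra) hu). destruct (hk u hu) as [hk1 hk2].
  rewrite !hphi.
  replace (k1 u * phi1 y u + k2 u * phi2 y u - (k1 u * phi1 y0 u + k2 u * phi2 y0 u))
    with (k1 u * (phi1 y u - phi1 y0 u) + k2 u * (phi2 y u - phi2 y0 u)) by ring.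
  eapply Rle_trans; [apply Rabs_triang|]. rewrite !Rabs_mult.
  assert (Rabs (k1 u) * Rabs (phi1 y u - phi1 y0 u) <= K * e)
    by (apply Rmult_le_compat; try apply Rabs_pos; lra).
  assert (Rabs (k2 u) * Rabs (phi2 y u - phi2 y0 u) <= K * e)
    by (apply Rmult_le_compat; try apply Rabs_pos; lra).
  assert (2 * (K * e) <= eps)
    by (unfold e; apply (Rmult_le_reg_r (K + 1)); [lra|]; field_simplify; nra).
  lra.
Qed.

Lemma derivable_pt_lim_Jint a (phi Dphi : R -> R -> R) y0 : 0 < a ->
  (forall y, continuity (phi y)) -> (forall y, continuity (Dphi y)) ->
  (forall y u, derivable_pt_lim (fun z => phi z u) y (Dphi y u)) ->
  unif_continuity_pt Dphi y0 ->
  derivable_pt_lim (fun y => Jint a (phi y)) y0 (Jint a (Dphi y0)).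
Proof.
  intros ha hc hdc hd hu eps he.
  assert (hC : 0 < 2 + 1 / a) by (assert (0 < 1 / a) by (apply Rdiv_lt_0_compat; lra); lra).
  set (C := 2 + 1 / a) in *.
  destruct (hu (eps / (2 * C))) as [d [dp hdd]]; [apply Rdiv_lt_0_compat; lra|].
  exists (mkposreal d dp). intros h hh hhd. simpl in hhd.
  set (q := fun u => / h * (1 * phi (y0 + h) u + (-1) * phi y0 u) + (-1) * Dphi y0 u).
  assert (hq : continuity q) by (repeat apply continuity_lin; auto).
  replace ((Jint a (phi (y0 + h)) - Jint a (phi y0)) / h - Jint a (Dphi y0)) with (Jint a q)
    by (unfold q; rewrite !Jint_lin by (repeat apply continuity_lin; auto); field; auto).
  (* By the mean value theorem in [y], the difference quotient of [phi] is a value of [Dphi] near [y0]. *)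
  assert (bq : forall u, 0 <= u <= 1 -> Rabs (q u) <= eps / (2 * C)).
  { intros u hu01.
    destruct (MVT_gen (fun z => phi z u) y0 (y0 + h) (fun z => Dphi z u)) as [y [hy1 hy2]].
    - intros x _. apply is_derive_Reals, hd.
    - intros x _. apply derivable_continuous_pt. exists (Dphi x u). apply hd.
    - simpl in hy2. replace (y0 + h - y0) with h in hy2 by ring.
      replace (q u) with (Dphi y u - Dphi y0 u)
        by (unfold q; replace (phi (y0 + h) u) with (phi y0 u + Dphi y u * h) by lra; field; auto).
      apply hdd; auto.
      destruct (Rle_dec y0 (y0 + h)).
      + rewrite Rmin_left, Rmax_right in hy1 by lra. rewrite Rabs_right in hhd |- *; lra.
      + rewrite Rmin_right, Rmax_left in hy1 by lra. rewrite Rabs_left1 in hhd |- *; lra. }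
  eapply Rle_lt_trans; [apply (Jint_bound a ha q (eps / (2 * C)) hq bq)|].
  fold C. replace (eps / (2 * C) * C) with (eps / 2) by (field; lra). lra.
Qed.

(** * d'Alembert's formula *)

Definition prim (g : R -> R) (y : R) : R := RInt g 0 y.
Definition wave (c : R) (g : R -> R) (x s : R) : R := (prim g (x + c * s) - prim g (x - c * s)) / (2 * c).
Definition wave_t (c : R) (g : R -> R) (x s : R) : R := (g (x + c * s) + g (x - c * s)) / 2.
Definition wave_x (c : R) (g : R -> R) (x s : R) : R := (g (x + c * s) - g (x - c * s)) / (2 * c).

Lemma derivable_pt_lim_prim g y : continuity g -> derivable_pt_lim (prim g) y (g y).
Proof.
  intros hg. apply is_derive_Reals, (is_derive_RInt (V := R_NormedModule) g (prim g) 0 y).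
  - exists (mkposreal 1 Rlt_0_1). intros b _.
    apply (RInt_correct (V := R_CompleteNormedModule)), ex_RInt_continuity_pt. intros; apply hg.
  - apply continuity_pt_filterlim, hg.
Qed.

Lemma wave_sol_eq c g x s : 0 < c -> continuity g -> wave_sol c g x s = wave c g x s.
Proof.
  intros hc hg. unfold wave_sol, wave, prim. rewrite Defs_RInt_continuous by exact hg.
  rewrite RInt_Chasles_0 by (apply ex_RInt_continuity_pt; intros; apply hg). unfold Rdiv; ring.
Qed.

Lemma derivable_pt_lim_shift_t (F F' : R -> R) c x s : (forall z, derivable_pt_lim F z (F' z)) ->
  derivable_pt_lim (fun s => F (x + c * s)) s (c * F' (x + c * s)) /\
  derivable_pt_lim (fun s => F (x - c * s)) s (- c * F' (x - c * s)).
Proof.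
  intros hF. split; apply is_derive_Reals;
    (apply (is_derive_comp F); [apply is_derive_Reals, hF|]); auto_derive; auto; ring.
Qed.

Lemma derivable_pt_lim_shift_x (F F' : R -> R) c x s : (forall z, derivable_pt_lim F z (F' z)) ->
  derivable_pt_lim (fun y => F (y + c * s)) x (F' (x + c * s)) /\
  derivable_pt_lim (fun y => F (y - c * s)) x (F' (x - c * s)).
Proof.
  intros hF. split; apply is_derive_Reals;
    [rewrite <- (Rmult_1_l (F' (x + c * s))) | rewrite <- (Rmult_1_l (F' (x - c * s)))];
    (apply (is_derive_comp F); [apply is_derive_Reals, hF|]); auto_derive; auto; ring.
Qed.

Lemma wave_0 c g x : wave c g x 0 = 0.
Proof. unfold wave. rewrite Rmult_0_r, Rplus_0_r, Rminus_0_r. unfold Rdiv. ring. Qed.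

Lemma wave_t_0 c g x : wave_t c g x 0 = g x.
Proof. unfold wave_t. rewrite Rmult_0_r, Rplus_0_r, Rminus_0_r. field. Qed.

Lemma derivable_pt_lim_wave_t c g x s : 0 < c -> continuity g ->
  derivable_pt_lim (fun s => wave c g x s) s (wave_t c g x s).
Proof.
  intros hc hg.
  destruct (derivable_pt_lim_shift_t (prim g) g c x s (fun z => derivable_pt_lim_prim g z hg)) as [h1 h2].
  replace (wave_t c g x s) with ((c * g (x + c * s) - - c * g (x - c * s)) / (2 * c))
    by (unfold wave_t; field; lra).
  apply (derivable_pt_lim_div_scal (fun s => prim g (x + c * s) - prim g (x - c * s))).
  apply derivable_pt_lim_minus; auto.
Qed.

Lemma derivable_pt_lim_wave_x c g x s : continuity g ->
  derivable_pt_lim (fun y => wave c g y s) x (wave_x c g x s).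
Proof.
  intros hg.
  destruct (derivable_pt_lim_shift_x (prim g) g c x s (fun z => derivable_pt_lim_prim g z hg)) as [h1 h2].
  apply (derivable_pt_lim_div_scal (fun y => prim g (y + c * s) - prim g (y - c * s))).
  apply derivable_pt_lim_minus; auto.
Qed.

Lemma derivable_pt_lim_wave_t_t c g g' x s : 0 < c -> (forall z, derivable_pt_lim g z (g' z)) ->
  derivable_pt_lim (fun s => wave_t c g x s) s (c ^ 2 * wave_x c g' x s).
Proof.
  intros hc hg. destruct (derivable_pt_lim_shift_t g g' c x s hg) as [h1 h2].
  replace (c ^ 2 * wave_x c g' x s) with ((c * g' (x + c * s) + - c * g' (x - c * s)) / 2)
    by (unfold wave_x; field; lra).
  apply (derivable_pt_lim_div_scal (fun s => g (x + c * s) + g (x - c * s))).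
  apply derivable_pt_lim_plus; auto.
Qed.

Lemma derivable_pt_lim_wave_x_x c g g' x s : (forall z, derivable_pt_lim g z (g' z)) ->
  derivable_pt_lim (fun y => wave_x c g y s) x (wave_x c g' x s).
Proof.
  intros hg. destruct (derivable_pt_lim_shift_x g g' c x s hg) as [h1 h2].
  apply (derivable_pt_lim_div_scal (fun y => g (y + c * s) - g (y - c * s))).
  apply derivable_pt_lim_minus; auto.
Qed.

Lemma continuity_shift (F : R -> R) c x : continuity F ->
  continuity (fun s => F (x + c * s)) /\ continuity (fun s => F (x - c * s)).
Proof.
  intros hF. split; intros s;
    [apply (continuity_pt_comp (fun s => x + c * s) F) | apply (continuity_pt_comp (fun s => x - c * s) F)];
    try apply hF; apply derivable_continuous_pt, derivable_pt_plus;
    try apply derivable_pt_const; try apply derivable_pt_opp; apply derivable_pt_scal, derivable_pt_id.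
Qed.

Lemma continuity_wave_t c F x : continuity F -> continuity (wave_t c F x).
Proof.
  intros hF s. destruct (continuity_shift F c x hF) as [h1 h2].
  unfold wave_t, Rdiv. apply continuity_pt_mult; [apply continuity_pt_plus; auto|].
  apply continuity_pt_const. intros ? ?; reflexivity.
Qed.

Lemma continuity_wave_x c F x : continuity F -> continuity (wave_x c F x).
Proof.
  intros hF s. destruct (continuity_shift F c x hF) as [h1 h2].
  unfold wave_x, Rdiv. apply continuity_pt_mult; [apply continuity_pt_minus; auto|].
  apply continuity_pt_const. intros ? ?; reflexivity.
Qed.

Lemma continuity_wave c g x : 0 < c -> continuity g -> continuity (wave c g x).
Proof.
  intros hc hg. apply (continuity_of_derivable_pt_lim _ (wave_t c g x)).
  intros s. apply derivable_pt_lim_wave_t; auto.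
Qed.

Lemma unif_continuity_pt_lin_comp (F k1 k2 p1 q1 p2 q2 : R -> R) (phi : R -> R -> R) B y0 :
  continuity F ->
  (forall u, 0 <= u <= 1 -> Rabs (k1 u) <= B /\ Rabs (k2 u) <= B /\ Rabs (p1 u) <= B /\
                             Rabs (q1 u) <= B /\ Rabs (p2 u) <= B /\ Rabs (q2 u) <= B) ->
  (forall y u, phi y u = k1 u * F (p1 u + q1 u * y) + k2 u * F (p2 u + q2 u * y)) ->
  unif_continuity_pt phi y0.
Proof.
  intros hF hB hphi.
  apply (unif_continuity_pt_lin phi (fun y u => F (p1 u + q1 u * y)) (fun y u => F (p2 u + q2 u * y))
           k1 k2 B y0); auto.
  - intros u hu. destruct (hB u hu) as (? & ? & _). auto.
  - apply (unif_continuity_pt_comp F p1 q1 B B); auto.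
    intros u hu. destruct (hB u hu) as (_ & _ & ? & ? & _). auto.
  - apply (unif_continuity_pt_comp F p2 q2 B B); auto.
    intros u hu. destruct (hB u hu) as (_ & _ & _ & _ & ? & ?). auto.
Qed.

Section AveragedWave.

Variables (a c : R) (g g' g'' : R -> R).
Hypotheses (ha : 0 < a) (hc : 0 < c).
Hypothesis hg1 : forall x, derivable_pt_lim g x (g' x).
Hypothesis hg2 : forall x, derivable_pt_lim g' x (g'' x).

Let cg : continuity g := continuity_of_derivable_pt_lim g g' hg1.
Let cg' : continuity g' := continuity_of_derivable_pt_lim g' g'' hg2.

Lemma derivable_pt_lim_Jint_wave_t x t :
  derivable_pt_lim (fun s => Jint a (fun u => wave c g x (u * s))) t
    (Jint a (fun u => u * wave_t c g x (u * t))).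
Proof.
  apply (derivable_pt_lim_Jint a (fun s u => wave c g x (u * s)) (fun s u => u * wave_t c g x (u * s)));
    auto.
  - intros s. apply continuity_scale, continuity_wave; auto.
  - intros s. apply continuity_id_mult, continuity_scale, continuity_wave_t; auto.
  - intros s u. apply derivable_pt_lim_dilate. intros; apply derivable_pt_lim_wave_t; auto.
  - apply (unif_continuity_pt_lin_comp g (fun u => u / 2) (fun u => u / 2) (fun _ => x) (fun u => c * u)
           (fun _ => x) (fun u => - (c * u)) _ (Rabs x + c + 1)); auto.
    + intros u hu. assert (hx1 := RRle_abs x). assert (hx2 := Rabs_maj2 x).
      repeat split; apply Rabs_le; split; nra.
    + intros s u. unfold wave_t. replace (x - c * (u * s)) with (x + - (c * u) * s) by ring.
      replace (x + c * (u * s)) with (x + c * u * s) by ring. field.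
Qed.

Lemma derivable_pt_lim_Jint_wave_t_t x t :
  derivable_pt_lim (fun s => Jint a (fun u => u * wave_t c g x (u * s))) t
    (Jint a (fun u => u * (u * (c ^ 2 * wave_x c g' x (u * t))))).
Proof.
  apply (derivable_pt_lim_Jint a (fun s u => u * wave_t c g x (u * s))
           (fun s u => u * (u * (c ^ 2 * wave_x c g' x (u * s))))); auto.
  - intros s. apply continuity_id_mult, continuity_scale, continuity_wave_t; auto.
  - intros s. apply continuity_id_mult, continuity_id_mult.
    apply continuity_scal, continuity_scale, continuity_wave_x; auto.
  - intros s u. apply (derivable_pt_lim_scal (fun s => wave_t c g x (u * s))).
    apply (derivable_pt_lim_dilate (wave_t c g x) (fun z => c ^ 2 * wave_x c g' x z)).
    intros; apply derivable_pt_lim_wave_t_t; auto.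
  - apply (unif_continuity_pt_lin_comp g' (fun u => c * u ^ 2 / 2) (fun u => - (c * u ^ 2 / 2))
           (fun _ => x) (fun u => c * u) (fun _ => x) (fun u => - (c * u)) _ (Rabs x + c + 1)); auto.
    + intros u hu. assert (hx1 := RRle_abs x). assert (hx2 := Rabs_maj2 x).
      assert (0 <= u ^ 2 <= 1) by (split; nra).
      repeat split; apply Rabs_le; split; nra.
    + intros s u. unfold wave_x. replace (x - c * (u * s)) with (x + - (c * u) * s) by ring.
      replace (x + c * (u * s)) with (x + c * u * s) by ring. field. lra.
Qed.

Lemma derivable_pt_lim_Jint_wave_x x t :
  derivable_pt_lim (fun y => Jint a (fun u => wave c g y (u * t))) x
    (Jint a (fun u => wave_x c g x (u * t))).
Proof.
  apply (derivable_pt_lim_Jint a (fun y u => wave c g y (u * t)) (fun y u => wave_x c g y (u * t))); auto.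
  - intros y. apply continuity_scale, continuity_wave; auto.
  - intros y. apply continuity_scale, continuity_wave_x; auto.
  - intros y u. apply derivable_pt_lim_wave_x; auto.
  - apply (unif_continuity_pt_lin_comp g (fun _ => / (2 * c)) (fun _ => - / (2 * c))
           (fun u => c * u * t) (fun _ => 1) (fun u => - (c * u * t)) (fun _ => 1) _
           (c * Rabs t + / (2 * c) + 1)); auto.
    + intros u hu. assert (ht1 := RRle_abs t). assert (ht2 := Rabs_maj2 t).
      assert (0 < / (2 * c)) by (apply Rinv_0_lt_compat; lra).
      assert (c * u * Rabs t <= c * Rabs t) by (apply Rmult_le_compat_r; [apply Rabs_pos| nra]).
      assert (Rabs (c * u * t) <= c * u * Rabs t)
        by (rewrite !Rabs_mult, (Rabs_right c), (Rabs_right u); lra).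
      assert (0 <= c * Rabs t) by (apply Rmult_le_pos; [lra| apply Rabs_pos]).
      repeat split; try rewrite Rabs_Ropp; try lra; apply Rabs_le; split; lra.
    + intros y u. unfold wave_x. replace (y + c * (u * t)) with (c * u * t + 1 * y) by ring.
      replace (y - c * (u * t)) with (- (c * u * t) + 1 * y) by ring. field. lra.
Qed.

Lemma derivable_pt_lim_Jint_wave_x_x x t :
  derivable_pt_lim (fun y => Jint a (fun u => wave_x c g y (u * t))) x
    (Jint a (fun u => wave_x c g' x (u * t))).
Proof.
  apply (derivable_pt_lim_Jint a (fun y u => wave_x c g y (u * t)) (fun y u => wave_x c g' y (u * t)));
    auto.
  - intros y. apply continuity_scale, continuity_wave_x; auto.
  - intros y. apply continuity_scale, continuity_wave_x; auto.
  - intros y u. apply derivable_pt_lim_wave_x_x; auto.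
  - apply (unif_continuity_pt_lin_comp g' (fun _ => / (2 * c)) (fun _ => - / (2 * c))
           (fun u => c * u * t) (fun _ => 1) (fun u => - (c * u * t)) (fun _ => 1) _
           (c * Rabs t + / (2 * c) + 1)); auto.
    + intros u hu. assert (ht1 := RRle_abs t). assert (ht2 := Rabs_maj2 t).
      assert (0 < / (2 * c)) by (apply Rinv_0_lt_compat; lra).
      assert (c * u * Rabs t <= c * Rabs t) by (apply Rmult_le_compat_r; [apply Rabs_pos| nra]).
      assert (Rabs (c * u * t) <= c * u * Rabs t)
        by (rewrite !Rabs_mult, (Rabs_right c), (Rabs_right u); lra).
      assert (0 <= c * Rabs t) by (apply Rmult_le_pos; [lra| apply Rabs_pos]).
      repeat split; try rewrite Rabs_Ropp; try lra; apply Rabs_le; split; lra.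
    + intros y u. unfold wave_x. replace (y + c * (u * t)) with (c * u * t + 1 * y) by ring.
      replace (y - c * (u * t)) with (- (c * u * t) + 1 * y) by ring. field. lra.
Qed.

(* Integration by parts against [sigma' = -2 a u rho], using [sigma = rho (1 - u^2)] and [sigma 0 = 1]. *)
Lemma Jint_wave_by_parts x t : 0 < t ->
  Jint a (fun u => u * (u * (c ^ 2 * wave_x c g' x (u * t))) + 2 * a / t * (u * wave_t c g x (u * t))
                   - c ^ 2 * wave_x c g' x (u * t))
  = g x / t.
Proof.
  intros ht.
  assert (cf : continuity (fun u => c ^ 2 * wave_x c g' x (u * t)))
    by (apply continuity_scal, continuity_scale, continuity_wave_x; auto).
  assert (cw : continuity (fun u => wave_t c g x (u * t)))
    by (apply continuity_scale, continuity_wave_t; auto).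
  apply Jint_unique; auto.
  { apply continuity_minus; [apply continuity_plus|]; auto.
    - apply continuity_id_mult, continuity_id_mult; auto.
    - apply continuity_scal, continuity_id_mult; auto. }
  apply (filterlim_ext_loc
           (fun b => (-1 / t) * (sigma a b * wave_t c g x (b * t)) + (1 / t) * wave_t c g x (0 * t))).
  - apply at_left_intro. exists 1. split; [lra|]. intros b hb. symmetry.
    replace (-1 / t * (sigma a b * wave_t c g x (b * t)) + 1 / t * wave_t c g x (0 * t))
      with (- (sigma a b * wave_t c g x (b * t)) / t - - (sigma a 0 * wave_t c g x (0 * t)) / t)
      by (rewrite sigma_0; field; lra).
    apply (RInt_derivable_pt_lim (fun u => - (sigma a u * wave_t c g x (u * t)) / t)).
    + intros u hu. rewrite Rmin_left, Rmax_right in hu by lra.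
      match goal with |- derivable_pt_lim _ _ ?l =>
        replace l with (- (- 2 * a * u * rho a u * wave_t c g x (u * t)
                           + sigma a u * (t * (c ^ 2 * wave_x c g' x (u * t)))) / t)
          by (rewrite sigma_rho by lra; field; lra) end.
      apply derivable_pt_lim_div_scal, derivable_pt_lim_opp.
      apply (derivable_pt_lim_mult (sigma a) (fun u => wave_t c g x (u * t)));
        [apply derivable_pt_lim_sigma; lra|].
      apply (derivable_pt_lim_dilate_l (wave_t c g x) (fun z => c ^ 2 * wave_x c g' x z)).
      intros z. apply derivable_pt_lim_wave_t_t; auto.
    + intros u hu. rewrite Rmin_left, Rmax_right in hu by lra.
      apply continuity_pt_rho_mult; [| lra].
      apply continuity_minus; [apply continuity_plus|]; auto.
      * apply continuity_id_mult, continuity_id_mult; auto.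
      * apply continuity_scal, continuity_id_mult; auto.
  - replace (g x / t) with (-1 / t * 0 + 1 / t * wave_t c g x (0 * t))
      by (rewrite Rmult_0_l, wave_t_0; field; lra).
    apply filterlim_lin; [apply filterlim_sigma_mult; auto| apply filterlim_const].
Qed.

Lemma Jint_wave_identity x t : 0 < t ->
  Jint a (fun u => u * (u * (c ^ 2 * wave_x c g' x (u * t))))
    + 2 * a / t * Jint a (fun u => u * wave_t c g x (u * t))
  = c ^ 2 * Jint a (fun u => wave_x c g' x (u * t)) + g x / t.
Proof.
  intros ht. rewrite <- (Jint_wave_by_parts x t ht).
  set (F := fun u => wave_x c g' x (u * t)). set (W := fun u => u * wave_t c g x (u * t)).
  change (Jint a (fun u => u * (u * (c ^ 2 * F u))) + 2 * a / t * Jint a W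
          = c ^ 2 * Jint a F + Jint a (fun u => u * (u * (c ^ 2 * F u)) + 2 * a / t * W u - c ^ 2 * F u)).
  assert (cF : continuity F) by (apply continuity_scale, continuity_wave_x; auto).
  assert (cW : continuity W) by (apply continuity_id_mult, continuity_scale, continuity_wave_t; auto).
  assert (cFF : continuity (fun u => u * (u * (c ^ 2 * F u))))
    by (apply continuity_id_mult, continuity_id_mult, continuity_scal; auto).
  rewrite (Jint_ext a (fun u => u * (u * (c ^ 2 * F u)) + 2 * a / t * W u - c ^ 2 * F u)
                      (fun u => 1 * (1 * (u * (u * (c ^ 2 * F u))) + 2 * a / t * W u) + (- c ^ 2) * F u))
    by (intros; ring).
  rewrite !Jint_lin by (repeat apply continuity_lin; auto). ring.
Qed.

Lemma Jint_wave_at_0 x : Jint a (fun u => wave c g x (u * 0)) = 0.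
Proof.
  transitivity (Jint a (fun _ => 0)); [|apply Jint_zero; auto].
  apply Jint_ext. intros u. rewrite Rmult_0_r. apply wave_0.
Qed.

Lemma Jint_wave_t_at_0 x : Jint a (fun u => u * wave_t c g x (u * 0)) = 1 / (2 * a) * g x.
Proof.
  assert (cid : continuity (fun u => u)) by exact (derivable_continuous _ derivable_id).
  rewrite (Jint_ext a _ (fun u => g x * u + 0 * u))
    by (intros u; rewrite Rmult_0_r, wave_t_0; ring).
  rewrite Jint_lin, Jint_id by auto. ring.
Qed.

End AveragedWave.

(** * Euler's Gamma function *)

Lemma filterlim_at_0_pinfty_lin (f g : R -> R) (lf lg p q : R) :
  filterlim f (at_right 0) (locally lf) -> filterlim g (Rbar_locally p_infty) (locally lg) ->
  filterlim (fun z => p * f (fst z) + q * g (snd z)) at_0_pinfty (locally (p * lf + q * lg)).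
Proof.
  intros hf hg. apply filterlim_lin;
    [apply filterlim_comp with (1 := filterlim_fst); exact hf
    |apply filterlim_comp with (1 := filterlim_snd); exact hg].
Qed.

Lemma filterlim_pinfty_monotone (f : R -> R) N0 Bd :
  (forall x y, N0 < x -> x <= y -> f x <= f y) -> (forall x, N0 < x -> f x <= Bd) ->
  exists L, filterlim f (Rbar_locally p_infty) (locally L).
Proof.
  intros hm hb.
  set (E := fun v => exists x, N0 < x /\ v = f x).
  assert (bE : bound E) by (exists Bd; intros v [x [hx ->]]; apply hb; auto).
  assert (nE : exists v, E v) by (exists (f (N0 + 1)), (N0 + 1); split; [lra| auto]).
  destruct (completeness E bE nE) as [L [hub hlub]].
  exists L. apply (proj2 (filterlim_Rabs _ _ _)). intros eps he.
  destruct (classic (exists x0, N0 < x0 /\ L - eps < f x0)) as [[x0 [hx0 hf0]]|nex].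
  - exists x0. intros M hM.
    assert (f x0 <= f M) by (apply hm; lra).
    assert (f M <= L) by (apply hub; exists M; split; [lra| auto]).
    rewrite Rabs_left1 by lra. lra.
  - exfalso. assert (L <= L - eps); [|lra].
    apply hlub. intros v [x [hx ->]].
    destruct (Rle_dec (f x) (L - eps)) as [ok|ko]; auto.
    exfalso; apply nex; exists x; split; auto; lra.
Qed.

Definition gamma_integrand (a t : R) : R := Rpower t (a - 1) * exp (- t).

Lemma Gamma_unique a l : is_int_0_inf (gamma_integrand a) l -> Gamma a = l.
Proof.
  intros h. unfold Gamma.
  pose proof (epsilon_spec (inhabits 0) (is_int_0_inf (gamma_integrand a)) (ex_intro _ l h)) as H.
  apply (filterlim_locally_unique (F := at_0_pinfty) (V := R_NormedModule)
           (fun p => RInt (gamma_integrand a) (fst p) (snd p)));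
    apply filterlim_of_is_int_0_inf; assumption.
Qed.

Lemma gamma_integrand_pos a t : 0 < gamma_integrand a t.
Proof. apply Rmult_lt_0_compat; [apply Rpower_pos| apply exp_pos]. Qed.

Lemma derivable_pt_lim_Rpower_exp a t : 0 < t ->
  derivable_pt_lim (fun t => Rpower t a * exp (- t)) t
    (a * gamma_integrand a t - gamma_integrand (a + 1) t).
Proof.
  intros ht. unfold gamma_integrand. replace (a + 1 - 1) with a by ring.
  replace (a * (Rpower t (a - 1) * exp (- t)) - Rpower t a * exp (- t))
    with (a * Rpower t (a - 1) * exp (- t) + Rpower t a * (exp (- t) * -1)) by ring.
  apply (derivable_pt_lim_mult (fun t => Rpower t a) (fun t => exp (- t)));
    [apply derivable_pt_lim_power; auto|].
  apply (derivable_pt_lim_comp (fun t => - t) exp); [|apply derivable_pt_lim_exp].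
  apply derivable_pt_lim_opp, derivable_pt_lim_id.
Qed.

Lemma continuity_pt_gamma_integrand a t : 0 < t -> continuity_pt (gamma_integrand a) t.
Proof.
  intros ht. apply derivable_continuous_pt.
  exists ((a - 1) * gamma_integrand (a - 1) t - gamma_integrand (a - 1 + 1) t).
  apply (derivable_pt_lim_Rpower_exp (a - 1) t ht).
Qed.

Lemma ex_RInt_gamma_integrand a e M : 0 < e -> 0 < M -> ex_RInt (gamma_integrand a) e M.
Proof.
  intros he hM. apply ex_RInt_continuity_pt. intros u hu. apply continuity_pt_gamma_integrand.
  destruct (Rle_dec e M); [rewrite Rmin_left in hu| rewrite Rmin_right in hu]; lra.
Qed.

Lemma RInt_gamma_integrand_ge0 a x y : 0 < x -> x <= y -> 0 <= RInt (gamma_integrand a) x y.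
Proof.
  intros hx hxy. apply RInt_ge_0; auto; [apply ex_RInt_gamma_integrand; lra|].
  intros; left; apply gamma_integrand_pos.
Qed.

Lemma ln_le_sub1 x : 0 < x -> ln x <= x - 1.
Proof. intros hx. assert (H := exp_ineq1_le (ln x)). rewrite exp_ln in H by auto. lra. Qed.

(* [ln t <= t / (2 m) + ln (2 m) - 1], the tangent line of [ln] at [2 m]. *)
Lemma mul_ln_le m t : 0 < m -> 0 < t -> m * ln t <= t / 2 + m * (ln (2 * m) - 1).
Proof.
  intros hm ht. assert (H := ln_le_sub1 (t / (2 * m)) ltac:(apply Rdiv_lt_0_compat; lra)).
  unfold Rdiv in H. rewrite ln_mult, ln_Rinv in H by (try apply Rinv_0_lt_compat; lra).
  assert (H0 : m * ln t <= m * (t * / (2 * m) - 1 + ln (2 * m))) by (apply Rmult_le_compat_l; lra).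
  replace (m * (t * / (2 * m) - 1 + ln (2 * m))) with (t / 2 + m * (ln (2 * m) - 1)) in H0
    by (field; lra).
  exact H0.
Qed.

Lemma gamma_integrand_le_head a t : 0 < t <= 1 -> gamma_integrand a t <= Rpower t (a - 1).
Proof.
  intros ht. unfold gamma_integrand. assert (exp (- t) <= 1) by (rewrite <- exp_0; apply exp_le_mono; lra).
  assert (Hp := Rpower_pos t (a - 1)). nra.
Qed.

Lemma gamma_integrand_le_tail a t : 1 <= t ->
  gamma_integrand a t <= exp ((Rabs (a - 1) + 1) * (ln (2 * (Rabs (a - 1) + 1)) - 1)) * exp (- t / 2).
Proof.
  intros ht. assert (hm : 0 < Rabs (a - 1) + 1) by (assert (H := Rabs_pos (a - 1)); lra).
  set (m := Rabs (a - 1) + 1) in *.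
  unfold gamma_integrand, Rpower. rewrite <- !exp_plus. apply exp_le_mono.
  assert (hl : 0 <= ln t) by (rewrite <- ln_1; apply ln_le; lra).
  assert ((a - 1) * ln t <= m * ln t)
    by (apply Rmult_le_compat_r; auto; unfold m; assert (H := RRle_abs (a - 1)); lra).
  assert (hml := mul_ln_le m t hm ltac:(lra)). lra.
Qed.

Lemma Gamma_head_exists a : 0 < a ->
  exists L, filterlim (fun e => RInt (gamma_integrand a) e 1) (at_right 0) (locally L).
Proof.
  intros ha.
  set (A := fun x => RInt (gamma_integrand a) (/ x) 1).
  assert (hm : forall x y, 1 < x -> x <= y -> A x <= A y).
  { intros x y hx hxy. unfold A.
    assert (0 < / y) by (apply Rinv_0_lt_compat; lra).
    assert (/ y <= / x) by (apply Rinv_le_contravar; lra).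
    rewrite <- (RInt_Chasles (gamma_integrand a) (/ y) (/ x) 1) by (apply ex_RInt_gamma_integrand; lra).
    simpl. unfold plus; simpl. assert (hpos := RInt_gamma_integrand_ge0 a (/ y) (/ x)). lra. }
  assert (hb : forall x, 1 < x -> A x <= 1 / a).
  { intros x hx. unfold A.
    assert (he : 0 < / x) by (apply Rinv_0_lt_compat; lra).
    assert (he1 : / x < 1) by (rewrite <- Rinv_1; apply Rinv_lt_contravar; lra).
    assert (hcont : forall u, / x <= u <= 1 -> continuity_pt (fun t => Rpower t (a - 1)) u).
    { intros u hu. apply derivable_continuous_pt. exists ((a - 1) * Rpower u (a - 1 - 1)).
      apply derivable_pt_lim_power. lra. }
    apply Rle_trans with (RInt (fun t => Rpower t (a - 1)) (/ x) 1).
    - apply RInt_le; [lra| apply ex_RInt_gamma_integrand; lra| |].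
      + apply ex_RInt_continuity_pt. intros u hu. rewrite Rmin_left, Rmax_right in hu by lra. auto.
      + intros; apply gamma_integrand_le_head; lra.
    - rewrite (RInt_derivable_pt_lim (fun t => Rpower t a / a)).
      + unfold Rpower at 1. rewrite ln_1, Rmult_0_r, exp_0. assert (Hp := Rpower_pos (/ x) a).
        unfold Rdiv. apply Rplus_le_reg_r with (Rpower (/ x) a * / a).
        assert (0 < / a) by (apply Rinv_0_lt_compat; lra). nra.
      + intros u hu. rewrite Rmin_left, Rmax_right in hu by lra.
        replace (Rpower u (a - 1)) with (a * Rpower u (a - 1) / a) by (field; lra).
        apply derivable_pt_lim_div_scal, derivable_pt_lim_power. lra.
      + intros u hu. rewrite Rmin_left, Rmax_right in hu by lra. auto. }
  destruct (filterlim_pinfty_monotone A 1 (1 / a) hm hb) as [L hL].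
  exists L. apply (filterlim_ext_loc (fun e => A (/ e))).
  - exists (mkposreal 1 Rlt_0_1). intros e _ he. unfold A. rewrite Rinv_inv. reflexivity.
  - apply filterlim_comp with (1 := filterlim_Rinv_0_right). exact hL.
Qed.

Lemma Gamma_tail_exists a :
  exists L, filterlim (fun M => RInt (gamma_integrand a) 1 M) (Rbar_locally p_infty) (locally L).
Proof.
  set (C := exp ((Rabs (a - 1) + 1) * (ln (2 * (Rabs (a - 1) + 1)) - 1))).
  assert (hC : 0 < C) by apply exp_pos.
  apply (filterlim_pinfty_monotone _ 1 (2 * C)).
  - intros x y hx hxy.
    rewrite <- (RInt_Chasles (gamma_integrand a) 1 x y) by (apply ex_RInt_gamma_integrand; lra).
    simpl. unfold plus; simpl. assert (hpos := RInt_gamma_integrand_ge0 a x y). lra.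
  - intros x hx.
    assert (hcont : forall u, continuity_pt (fun t => C * exp (- t / 2)) u).
    { intros u. apply derivable_continuous_pt. exists (C * (exp (- u / 2) * (- 1 / 2))).
      apply is_derive_Reals. auto_derive; auto. unfold Rdiv. ring. }
    apply Rle_trans with (RInt (fun t => C * exp (- t / 2)) 1 x).
    + apply RInt_le; [lra| apply ex_RInt_gamma_integrand; lra| apply ex_RInt_continuity_pt; auto|].
      intros; apply gamma_integrand_le_tail; lra.
    + rewrite (RInt_derivable_pt_lim (fun t => - 2 * C * exp (- t / 2))); auto.
      * assert (exp (- x / 2) > 0) by apply exp_pos.
        assert (exp (- (1) / 2) <= 1) by (rewrite <- exp_0 at 2; apply exp_le_mono; lra).
        nra.
      * intros u _. apply is_derive_Reals. auto_derive; auto. unfold Rdiv. field.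
Qed.

Lemma Gamma_exists a : 0 < a -> exists l, is_int_0_inf (gamma_integrand a) l.
Proof.
  intros ha.
  destruct (Gamma_head_exists a ha) as [LA hA]. destruct (Gamma_tail_exists a) as [LB hB].
  exists (LA + LB). apply is_int_0_inf_of_filterlim; [intros; apply ex_RInt_gamma_integrand; auto|].
  apply (filterlim_ext_loc (fun z => 1 * RInt (gamma_integrand a) (fst z) 1
                                   + 1 * RInt (gamma_integrand a) 1 (snd z))).
  - apply at_0_pinfty_intro. exists 1, 1. split; [lra|]. intros e M he hM. simpl.
    rewrite <- (RInt_Chasles (gamma_integrand a) e 1 M) by (apply ex_RInt_gamma_integrand; lra).
    simpl. unfold plus; simpl. ring.
  - replace (LA + LB) with (1 * LA + 1 * LB) by ring.
    apply (filterlim_at_0_pinfty_lin (fun e => RInt (gamma_integrand a) e 1)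
                                     (fun M => RInt (gamma_integrand a) 1 M)); auto.
Qed.

Lemma filterlim_Rpower_exp_0 a : 0 < a ->
  filterlim (fun t => Rpower t a * exp (- t)) (at_right 0) (locally 0).
Proof.
  intros ha. apply (proj2 (filterlim_Rabs _ _ _)). intros eps he.
  assert (hr := Rpower_pos eps (/ a)).
  exists (mkposreal _ hr). intros t ht ht0.
  change (Rabs (t - 0) < Rpower eps (/ a)) in ht. rewrite Rminus_0_r, Rabs_right in ht by lra.
  rewrite Rminus_0_r, Rabs_mult, !Rabs_right by (left; try apply exp_pos; apply Rpower_pos).
  assert (exp (- t) <= 1) by (rewrite <- exp_0; apply exp_le_mono; lra).
  assert (Rpower t a < eps).
  { replace eps with (Rpower (Rpower eps (/ a)) a) by (rewrite Rpower_mult, Rinv_l, Rpower_1; lra).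
    apply Rlt_Rpower_l; lra. }
  assert (hp := Rpower_pos t a). nra.
Qed.

Lemma filterlim_Rpower_exp_pinfty a : 0 < a ->
  filterlim (fun t => Rpower t a * exp (- t)) (Rbar_locally p_infty) (locally 0).
Proof.
  intros ha. apply (proj2 (filterlim_Rabs _ _ _)). intros eps he.
  set (C := exp (a * (ln (2 * a) - 1))). assert (hC : 0 < C) by apply exp_pos.
  exists (Rmax 1 (8 * C / eps)). intros t ht.
  assert (H1 := Rmax_l 1 (8 * C / eps)). assert (H2 := Rmax_r 1 (8 * C / eps)).
  rewrite Rminus_0_r, Rabs_mult, !Rabs_right by (left; try apply exp_pos; apply Rpower_pos).
  unfold Rpower. rewrite <- exp_plus.
  assert (hl := mul_ln_le a t ha ltac:(lra)).
  assert (exp (a * ln t + - t) <= C * exp (- (t / 2)))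
    by (unfold C; rewrite <- exp_plus; apply exp_le_mono; lra).
  assert (exp (- (t / 2)) < / (1 + t / 2)).
  { rewrite exp_Ropp. apply Rinv_lt_contravar; [assert (Hep := exp_pos (t / 2)); nra|].
    apply exp_ineq1. lra. }
  assert (C * / (1 + t / 2) <= eps / 4).
  { apply (Rmult_le_reg_r (1 + t / 2)); [lra|]. rewrite Rmult_assoc, Rinv_l, Rmult_1_r by lra.
    assert (8 * C / eps * eps = 8 * C) by (field; lra). nra. }
  assert (C * exp (- (t / 2)) < C * / (1 + t / 2)) by (apply Rmult_lt_compat_l; auto).
  lra.
Qed.

Lemma Gamma_succ a : 0 < a -> Gamma (a + 1) = a * Gamma a.
Proof.
  intros ha. destruct (Gamma_exists a ha) as [l hl]. rewrite (Gamma_unique a l hl).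
  set (Pe := fun t => Rpower t a * exp (- t)).
  apply Gamma_unique, is_int_0_inf_of_filterlim; [intros; apply ex_RInt_gamma_integrand; auto|].
  apply (filterlim_ext_loc (fun z => 1 * (1 * Pe (fst z) + (-1) * Pe (snd z))
                                   + a * RInt (gamma_integrand a) (fst z) (snd z))).
  - apply at_0_pinfty_intro. exists 1, 1. split; [lra|]. intros e M he hM. simpl.
    assert (h : RInt (fun t => a * gamma_integrand a t + (-1) * gamma_integrand (a + 1) t) e M
                = Pe M - Pe e).
    { apply RInt_derivable_pt_lim.
      - intros u hu. assert (hu0 : 0 < u) by (rewrite Rmin_left in hu; lra).
        replace (a * gamma_integrand a u + -1 * gamma_integrand (a + 1) u)
          with (a * gamma_integrand a u - gamma_integrand (a + 1) u) by ring.
        apply derivable_pt_lim_Rpower_exp; auto.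
      - intros u hu. assert (hu0 : 0 < u) by (rewrite Rmin_left in hu; lra).
        apply continuity_pt_plus; apply continuity_pt_scal, continuity_pt_gamma_integrand; auto. }
    rewrite RInt_lin in h by (apply ex_RInt_gamma_integrand; lra). lra.
  - replace (a * l) with (1 * (1 * 0 + (-1) * 0) + a * l) by ring.
    apply filterlim_lin; [apply (filterlim_at_0_pinfty_lin Pe Pe)| apply filterlim_of_is_int_0_inf; auto].
    + apply filterlim_Rpower_exp_0; auto.
    + apply filterlim_Rpower_exp_pinfty; auto.
Qed.

(** * The Gaussian integral and [Gamma (1/2)] *)

Definition gauss (x : R) : R := exp (- x ^ 2).
Definition gauss_kernel (y s : R) : R := exp (- y ^ 2 * (1 + s ^ 2)) / (1 + s ^ 2).
Definition gauss_aux (y : R) : R := RInt (gauss_kernel y) 0 1.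

Lemma continuity_gauss : continuity gauss.
Proof. apply continuity_of_ex_derive. intros x. unfold gauss. auto_derive. auto. Qed.

Lemma continuity_gauss_kernel y : continuity (gauss_kernel y).
Proof.
  apply continuity_of_ex_derive. intros s. unfold gauss_kernel.
  auto_derive. assert (0 <= s ^ 2) by apply pow2_ge_0. lra.
Qed.

Lemma gauss_bounds x : 0 < gauss x <= 1.
Proof.
  split; [apply exp_pos|]. rewrite <- exp_0. apply exp_le_mono.
  assert (0 <= x ^ 2) by apply pow2_ge_0. lra.
Qed.

Lemma prim_gauss_bounds y : 0 <= y -> 0 <= prim gauss y <= y.
Proof.
  intros hy. assert (ex : ex_RInt gauss 0 y) by (apply ex_RInt_continuity_pt; intros; apply continuity_gauss).
  split.
  - apply RInt_ge_0; auto. intros; left; apply gauss_bounds.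
  - assert (H := abs_RInt_le_const gauss 0 y 1 hy ex).
    assert (Rabs (prim gauss y) <= (y - 0) * 1)
      by (apply H; intros; rewrite Rabs_right by (left; apply gauss_bounds); apply gauss_bounds).
    assert (prim gauss y <= Rabs (prim gauss y)) by apply RRle_abs. lra.
Qed.

Lemma gauss_aux_bounds y : 0 <= gauss_aux y <= gauss y.
Proof.
  assert (hk : forall s, 0 <= s -> 0 < gauss_kernel y s <= gauss y).
  { intros s hs. unfold gauss_kernel, gauss.
    assert (h2 : 0 <= s ^ 2) by apply pow2_ge_0. assert (h3 : 0 <= y ^ 2) by apply pow2_ge_0.
    assert (exp (- y ^ 2 * (1 + s ^ 2)) <= exp (- y ^ 2)) by (apply exp_le_mono; nra).
    assert (hp := exp_pos (- y ^ 2 * (1 + s ^ 2))).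
    split; [apply Rdiv_lt_0_compat; lra|].
    apply (Rmult_le_reg_r (1 + s ^ 2)); [lra|]. unfold Rdiv. rewrite Rmult_assoc, Rinv_l, Rmult_1_r by lra.
    assert (hq := exp_pos (- y ^ 2)). nra. }
  assert (ex : ex_RInt (gauss_kernel y) 0 1)
    by (apply ex_RInt_continuity_pt; intros; apply continuity_gauss_kernel).
  split.
  - apply RInt_ge_0; [lra| exact ex|]. intros; left; apply hk; lra.
  - assert (H := abs_RInt_le_const (gauss_kernel y) 0 1 (gauss y) ltac:(lra) ex).
    assert (Rabs (gauss_aux y) <= (1 - 0) * gauss y)
      by (apply H; intros t ht; rewrite Rabs_right by (left; apply hk; lra); apply hk; lra).
    assert (gauss_aux y <= Rabs (gauss_aux y)) by apply RRle_abs. lra.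
Qed.

Lemma derivable_pt_lim_gauss_aux y : derivable_pt_lim gauss_aux y (-2 * gauss y * prim gauss y).
Proof.
  assert (hD : forall z t, Derive (fun z => gauss_kernel z t) z = -2 * z * exp (- z ^ 2 * (1 + t ^ 2))).
  { intros z t. apply is_derive_unique. unfold gauss_kernel. assert (0 <= t ^ 2) by apply pow2_ge_0.
    auto_derive; [lra|]. simpl. field. nra. }
  assert (hcont : forall u, continuity_pt (fun t => y * gauss (y * t)) u).
  { intros u. apply continuity_pt_scal, (continuity_pt_comp (fun t => y * t) gauss);
      [|apply continuity_gauss].
    apply derivable_continuous_pt, derivable_pt_scal, derivable_pt_id. }
  apply is_derive_Reals. unfold gauss_aux.
  replace (-2 * gauss y * prim gauss y) with (RInt (fun t => Derive (fun z => gauss_kernel z t) y) 0 1).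
  - apply is_derive_RInt_param.
    + exists (mkposreal 1 Rlt_0_1). intros z _ t _. unfold gauss_kernel.
      assert (0 <= t ^ 2) by apply pow2_ge_0. auto_derive. lra.
    + intros t _. apply continuity_2d_pt_ext with (fun u v => (-2 * u) * exp (- (u * u) * (1 + v * v))).
      * intros u v. rewrite hD. simpl. f_equal. f_equal. ring.
      * apply continuity_2d_pt_mult.
        -- apply continuity_2d_pt_mult; [apply continuity_2d_pt_const| apply continuity_2d_pt_id1].
        -- apply (continuity_1d_2d_pt_comp exp); [apply derivable_continuous_pt, derivable_pt_exp|].
           apply continuity_2d_pt_mult.
           ++ apply continuity_2d_pt_opp, continuity_2d_pt_mult; apply continuity_2d_pt_id1.
           ++ apply continuity_2d_pt_plus; [apply continuity_2d_pt_const|].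
              apply continuity_2d_pt_mult; apply continuity_2d_pt_id2.
    + exists (mkposreal 1 Rlt_0_1). intros z _.
      apply ex_RInt_continuity_pt. intros; apply continuity_gauss_kernel.
  - (* Substituting [x = y t] turns the parameter derivative into [prim gauss y]. *)
    rewrite (RInt_ext _ (fun t => (-2 * gauss y) * (y * gauss (y * t)) + 0 * (y * gauss (y * t)))).
    + rewrite RInt_lin by (apply ex_RInt_continuity_pt; auto).
      rewrite (RInt_derivable_pt_lim (fun t => prim gauss (y * t))).
      * rewrite Rmult_0_r, Rmult_1_r. unfold prim at 2. rewrite RInt_point. simpl. unfold zero; simpl. ring.
      * intros u _. apply (derivable_pt_lim_dilate (prim gauss) gauss).
        intros; apply derivable_pt_lim_prim, continuity_gauss.
      * intros u _. auto.
    + intros t _. simpl. rewrite hD. unfold gauss.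
      replace (exp (- y ^ 2 * (1 + t ^ 2))) with (exp (- y ^ 2) * exp (- (y * t) ^ 2))
        by (rewrite <- exp_plus; f_equal; ring).
      ring.
Qed.

(* The classical argument: [gauss_aux y + (int_0^y e^(-x^2) dx)^2] has derivative [0]. *)
Lemma gauss_aux_add_sq y : gauss_aux y + prim gauss y ^ 2 = PI / 4.
Proof.
  set (h := fun y => gauss_aux y + prim gauss y * prim gauss y).
  assert (hd : forall y, derivable_pt_lim h y 0).
  { intros z. replace 0 with (-2 * gauss z * prim gauss z + (gauss z * prim gauss z + prim gauss z * gauss z))
      by ring.
    apply derivable_pt_lim_plus; [apply derivable_pt_lim_gauss_aux|].
    apply derivable_pt_lim_mult; apply derivable_pt_lim_prim, continuity_gauss. }
  assert (hconst : h y = h 0).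
  { destruct (MVT_gen h 0 y (fun _ => 0)) as [z [_ hz]].
    - intros; apply is_derive_Reals, hd.
    - intros; apply derivable_continuous_pt. exists 0. apply hd.
    - simpl in hz. lra. }
  assert (h0 : h 0 = PI / 4).
  { unfold h, gauss_aux, prim. rewrite RInt_point. simpl. unfold zero; simpl.
    rewrite (RInt_derivable_pt_lim atan).
    - rewrite atan_1, atan_0. ring.
    - intros u _. replace (gauss_kernel 0 u) with (/ (1 + u ^ 2)).
      + apply derivable_pt_lim_atan.
      + unfold gauss_kernel. replace (- 0 ^ 2 * (1 + u ^ 2)) with 0 by ring. rewrite exp_0. field.
        assert (0 <= u ^ 2) by apply pow2_ge_0. lra.
    - intros; apply continuity_gauss_kernel. }
  unfold h in hconst, h0. simpl. lra.
Qed.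

Lemma filterlim_prim_gauss : filterlim (prim gauss) (Rbar_locally p_infty) (locally (sqrt PI / 2)).
Proof.
  assert (hPI := PI_RGT_0).
  assert (haux : filterlim gauss_aux (Rbar_locally p_infty) (locally 0)).
  { apply (proj2 (filterlim_Rabs _ _ _)). intros eps he.
    exists (Rmax 1 (/ eps)). intros y hy.
    assert (H1 := Rmax_l 1 (/ eps)). assert (H2 := Rmax_r 1 (/ eps)).
    destruct (gauss_aux_bounds y) as [hk0 hk1]. rewrite Rminus_0_r, Rabs_right by lra.
    assert (exp (- y ^ 2) <= exp (- y)) by (apply exp_le_mono; simpl; nra).
    assert (exp (- y) < / (1 + y)).
    { rewrite exp_Ropp. apply Rinv_lt_contravar; [assert (Hep := exp_pos y); nra|]. apply exp_ineq1. lra. }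
    assert (/ (1 + y) < eps).
    { apply (Rmult_lt_reg_r (1 + y)); [lra|]. rewrite Rinv_l by lra.
      assert (/ eps * eps = 1) by (field; lra). nra. }
    unfold gauss in hk1. lra. }
  apply (filterlim_ext_loc (fun y => sqrt (1 * (PI / 4) + (-1) * gauss_aux y))).
  - exists 0. intros y hy. rewrite <- (gauss_aux_add_sq y).
    replace (1 * (gauss_aux y + prim gauss y ^ 2) + -1 * gauss_aux y) with (prim gauss y * prim gauss y)
      by ring.
    apply sqrt_square, prim_gauss_bounds. lra.
  - replace (sqrt PI / 2) with (sqrt (1 * (PI / 4) + (-1) * 0)).
    + apply filterlim_comp with (1 := filterlim_lin (fun _ => PI / 4) gauss_aux (PI / 4) 0 1 (-1)
                                        (filterlim_const _) haux).
      apply continuity_pt_filterlim, continuity_pt_sqrt. lra.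
    + replace (1 * (PI / 4) + -1 * 0) with (PI / (2 * 2)) by field.
      rewrite sqrt_div_alt, sqrt_square by lra. reflexivity.
Qed.

Lemma Gamma_half : Gamma (1 / 2) = sqrt PI.
Proof.
  assert (cE : continuity (prim gauss))
    by (apply (continuity_of_derivable_pt_lim _ gauss); intros;
        apply derivable_pt_lim_prim, continuity_gauss).
  apply Gamma_unique, is_int_0_inf_of_filterlim; [intros; apply ex_RInt_gamma_integrand; auto|].
  apply (filterlim_ext_loc (fun z => -2 * prim gauss (sqrt (fst z)) + 2 * prim gauss (sqrt (snd z)))).
  - apply at_0_pinfty_intro. exists 1, 1. split; [lra|]. intros e M he hM. simpl. symmetry.
    replace (-2 * prim gauss (sqrt e) + 2 * prim gauss (sqrt M))
      with (2 * prim gauss (sqrt M) - 2 * prim gauss (sqrt e)) by ring.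
    apply (RInt_derivable_pt_lim (fun t => 2 * prim gauss (sqrt t))).
    + intros u hu. rewrite Rmin_left in hu by lra. assert (hsq : 0 < sqrt u) by (apply sqrt_lt_R0; lra).
      replace (gamma_integrand (1 / 2) u) with (2 * (gauss (sqrt u) * / (2 * sqrt u))).
      * apply (derivable_pt_lim_scal (fun t => prim gauss (sqrt t))).
        apply (derivable_pt_lim_comp sqrt (prim gauss)).
        -- apply derivable_pt_lim_sqrt. lra.
        -- apply derivable_pt_lim_prim, continuity_gauss.
      * unfold gamma_integrand, gauss. rewrite pow2_sqrt by lra.
        replace (1 / 2 - 1) with (- / 2) by field. rewrite Rpower_Ropp, Rpower_sqrt by lra.
        field. lra.
    + intros u hu. rewrite Rmin_left in hu by lra. apply continuity_pt_gamma_integrand. lra.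
  - replace (sqrt PI) with (-2 * 0 + 2 * (sqrt PI / 2)) by field.
    apply (filterlim_at_0_pinfty_lin (fun e => prim gauss (sqrt e)) (fun M => prim gauss (sqrt M))).
    + replace 0 with (prim gauss (sqrt 0)) at 2
        by (rewrite sqrt_0; unfold prim; rewrite RInt_point; reflexivity).
      apply (filterlim_filter_le_1 (F := locally 0)); [apply filter_le_within|].
      apply (proj1 (continuity_pt_filterlim (fun e => prim gauss (sqrt e)) 0)).
      apply (continuity_pt_comp sqrt (prim gauss)); [|apply cE].
      apply continuity_pt_sqrt. lra.
    + apply filterlim_comp with (1 := filterlim_sqrt_p). apply filterlim_prim_gauss.
Qed.

Lemma Beta_half_factor a : 0 < a ->
  2 / Beta a (1 / 2) * (1 / (2 * a)) = Gamma (a + 1 / 2) / (sqrt PI * Gamma (a + 1)).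
Proof.
  intros ha. unfold Beta. rewrite Gamma_succ, Gamma_half by auto.
  unfold Rdiv. rewrite !Rinv_mult, Rinv_inv.
  transitivity ((2 * / 2) * (Gamma (a + 1 * / 2) * / sqrt PI * / a * / Gamma a)); [ring|].
  rewrite Rinv_r by lra. ring.
Qed.

Lemma v_sol_eq alpha c g : 0 < c -> continuity g ->
  v_sol alpha c g = fun x s => 2 / Beta alpha (1 / 2) * Jint alpha (fun u => wave c g x (u * s)).
Proof.
  intros hc hg. apply functional_extensionality; intros x. apply functional_extensionality; intros s.
  unfold v_sol, Jint. do 3 f_equal. apply functional_extensionality; intros u.
  rewrite wave_sol_eq; auto.
Qed.

Lemma right_deriv_of_derivable_pt_lim f x l : derivable_pt_lim f x l -> right_deriv f x l.
Proof.
  intros h eps he. destruct (h eps he) as [d hd]. exists d. split; [apply cond_pos|].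
  intros k hk. apply hd; [lra| rewrite Rabs_right; lra].
Qed.

Theorem theorem2p2 (c alpha : R) (g g' g'' : R -> R)
  (hc : 0 < c) (halpha : 0 < alpha)
  (hg1 : forall x, derivable_pt_lim g x (g' x))
  (hg2 : forall x, derivable_pt_lim g' x (g'' x))
  (hg3 : continuity g'') :
  (exists vt vtt vx vxx : R -> R -> R,
     forall x t, 0 < t ->
       derivable_pt_lim (fun s => v_sol alpha c g x s) t (vt x t) /\
       derivable_pt_lim (fun s => vt x s) t (vtt x t) /\
       derivable_pt_lim (fun y => v_sol alpha c g y t) x (vx x t) /\
       derivable_pt_lim (fun y => vx y t) x (vxx x t) /\
       vtt x t + 2 * alpha / t * vt x t
         = c ^ 2 * vxx x t + 2 * g x / (t * Beta alpha (1 / 2)))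
  /\ (forall x, v_sol alpha c g x 0 = 0)
  /\ (forall x, right_deriv (fun s => v_sol alpha c g x s) 0
        (Gamma (alpha + 1 / 2) / (sqrt PI * Gamma (alpha + 1)) * g x)).
Proof.
  assert (cg := continuity_of_derivable_pt_lim g g' hg1).
  rewrite (v_sol_eq alpha c g hc cg). cbv beta.
  set (K := 2 / Beta alpha (1 / 2)).
  assert (vt : forall x t, derivable_pt_lim (fun s => K * Jint alpha (fun u => wave c g x (u * s))) t
                             (K * Jint alpha (fun u => u * wave_t c g x (u * t))))
    by (intros; apply (derivable_pt_lim_scal (fun s => Jint alpha _)), derivable_pt_lim_Jint_wave_t with g';
        auto).
  split; [|split].
  - exists (fun x t => K * Jint alpha (fun u => u * wave_t c g x (u * t))),
           (fun x t => K * Jint alpha (fun u => u * (u * (c ^ 2 * wave_x c g' x (u * t))))),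
           (fun x t => K * Jint alpha (fun u => wave_x c g x (u * t))),
           (fun x t => K * Jint alpha (fun u => wave_x c g' x (u * t))).
    intros x t ht. repeat split; auto.
    + apply (derivable_pt_lim_scal (fun s => Jint alpha _)), derivable_pt_lim_Jint_wave_t_t with g''; auto.
    + apply (derivable_pt_lim_scal (fun y => Jint alpha _)), derivable_pt_lim_Jint_wave_x with g'; auto.
    + apply (derivable_pt_lim_scal (fun y => Jint alpha _)), derivable_pt_lim_Jint_wave_x_x with g''; auto.
    + transitivity (K * (Jint alpha (fun u => u * (u * (c ^ 2 * wave_x c g' x (u * t))))
                         + 2 * alpha / t * Jint alpha (fun u => u * wave_t c g x (u * t)))); [ring|].
      rewrite (Jint_wave_identity alpha c g g' g'') by auto.
      unfold K, Rdiv. rewrite Rinv_mult. ring.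
  - intros x. rewrite Jint_wave_at_0 by auto. ring.
  - intros x. specialize (vt x 0). rewrite Jint_wave_t_at_0 in vt by auto.
    rewrite <- (Beta_half_factor alpha halpha), Rmult_assoc.
    apply right_deriv_of_derivable_pt_lim, vt.
Qed.
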